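(* Let $k\in\mathbb N$, $k\ge1$. Then the polynomial $2^{2(k-1)}(a^{2k}-b^{2k})^2-(a^2-b^2)^{2k}\in\mathbb R[a,b]$ is a sum of squares of polynomials (of degree at most $2k$). *)

From HB Require Import structures.
From mathcomp Require Import all_boot all_order all_algebra.
From mathcomp Require Import reals.
From mathcomp Require Import mpoly.
Set Implicit Arguments. Unset Strict Implicit. Unset Printing Implicit Defensive.
Import GRing.Theory Num.Theory.
Local Open Scope ring_scope.

Definition Pk (R : realType) (k : nat) : {mpoly R[2]} :=
  (2 ^ (2 * (k - 1)))%:R
    * ('X_(0 : 'I_2) ^+ (2 * k) - 'X_(1 : 'I_2) ^+ (2 * k)) ^+ 2
  - ('X_(0 : 'I_2) ^+ 2 - 'X_(1 : 'I_2) ^+ 2) ^+ (2 * k).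

From HB Require Import structures.
From mathcomp Require Import all_boot all_order all_algebra.
From mathcomp Require Import reals.
From mathcomp Require Import mpoly.
From mathcomp Require Import ring zify.
Set Implicit Arguments. Unset Strict Implicit. Unset Printing Implicit Defensive.
Import Order.TTheory GRing.Theory Num.Theory.
Local Open Scope ring_scope.

(* Put u = a^2, v = b^2, c = 2^(k-1), T = (u - v)^(k-1) and
   S = u^(k-1) + u^(k-2) v + ... + v^(k-1), so that a^(2k) - b^(2k) = (u - v) S.
   Then P = (u - v)^2 (c S - T) (c S + T).  Expanding T by the binomial theorem,
   c S - T and c S + T are combinations of the u^(k-1-i) v^i with coefficients
   2^(k-1) -/+ (-1)^i C(k-1, i), nonnegative as C(k-1, i) <= 2^(k-1); so they
   are nonnegative combinations of squares of monomials a^p b^q; their product is again one, and multiplying by the square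
   (u - v)^2 yields squares of polynomials of degree 2k. *)

Lemma leq_bin_exp2 n i : ('C(n, i) <= 2 ^ n)%N.
Proof.
elim: n i => [|n IHn] [|i] //=; first by rewrite bin0 expn_gt0.
by rewrite binS expnS mul2n -addnn leq_add.
Qed.

Definition bin_weight (R : pzRingType) (e : R) n i : R :=
  (2 ^ n)%:R + e * ((-1) ^+ i * ('C(n, i))%:R).

Lemma bin_weight_ge0 (R : realDomainType) (e : R) n i :
  `|e| <= 1 -> 0 <= bin_weight e n i.
Proof.
move=> e_le1; rewrite /bin_weight -lerBlDl sub0r.
have Cn_le : ('C(n, i))%:R <= (2 ^ n)%:R :> R by rewrite ler_nat leq_bin_exp2.
have : `|e * ((-1) ^+ i * ('C(n, i))%:R)| <= (2 ^ n)%:R.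
  rewrite normrM normrM normrX normrN1 expr1n mul1r normr_nat.
  by apply: le_trans Cn_le; rewrite ler_piMl.
by rewrite ler_norml => /andP[].
Qed.

Section GeometricBinomial.
Variables (R : comNzRingType) (A : comAlgType R) (x y : A) (n : nat).

Let S := \sum_(i < n.+1) x ^+ (n - i) * y ^+ i.

Lemma sqr_subrXX_factor (c : R) :
  c ^+ 2 *: (x ^+ n.+1 - y ^+ n.+1) ^+ 2 - (x - y) ^+ (2 * n.+1) =
  (x - y) ^+ 2 * ((c *: S - (x - y) ^+ n) * (c *: S + (x - y) ^+ n)).
Proof.
pose C : A := c%:A; have scaleC z : c *: z = C * z by rewrite mulr_algl.
rewrite subrXX -/S mulnS exprD mulnC exprM expr2 -scalerA !scaleC.
set T := (x - y) ^+ n; ring.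
Qed.

Lemma scale_geom_add_expBn (e : R) :
  (2 ^ n)%:R *: S + e *: (x - y) ^+ n =
  \sum_(i < n.+1) bin_weight e n i *: (x ^+ (n - i) * y ^+ i).
Proof.
rewrite /S exprBn !scaler_sumr -big_split; apply: eq_bigr => i _ /=.
rewrite scalerDl -!scalerA -mulrA -mulrnAr; congr (_ + e *: _).
by rewrite scaler_nat -[in LHS]signr_odd -[in RHS]signr_odd scaler_sign mulr_sign.
Qed.

End GeometricBinomial.

Lemma mul_nneg_sums_sqr (R : rcfType) (A : comAlgType R) (I J : Type)
    (r : seq I) (s : seq J) (v : I -> R) (w : J -> R) (f : I -> A) (g : J -> A) :
    (forall i, 0 <= v i) -> (forall j, 0 <= w j) ->
  (\sum_(i <- r) v i *: f i ^+ 2) * (\sum_(j <- s) w j *: g j ^+ 2) =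
  \sum_(i <- r) \sum_(j <- s) (Num.sqrt (v i * w j) *: (f i * g j)) ^+ 2.
Proof.
move=> v_ge0 w_ge0; rewrite mulr_suml; apply: eq_bigr => i _.
rewrite mulr_sumr; apply: eq_bigr => j _.
by rewrite exprZn sqr_sqrtr ?mulr_ge0 // -scalerAl -scalerAr scalerA exprMn.
Qed.

Lemma msizeM_leq (R : idomainType) n (p q : {mpoly R[n]}) d e :
  (msize p <= d.+1)%N -> (msize q <= e.+1)%N -> (msize (p * q) <= (d + e).+1)%N.
Proof.
have [->|nz_p] := eqVneq p 0; first by rewrite mul0r msize0.
have [->|nz_q] := eqVneq q 0; first by rewrite mulr0 msize0.
rewrite msizeM //; lia.
Qed.

Lemma msizeXn (R : nzRingType) n (i : 'I_n) j :
  msize ('X_i ^+ j : {mpoly R[n]}) = j.+1.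
Proof. by rewrite mpolyXn msizeX mdegMn mdeg1 mul1n. Qed.

Lemma msizeXnXn (R : nzRingType) n (i l : 'I_n) j k :
  msize ('X_i ^+ j * 'X_l ^+ k : {mpoly R[n]}) = (j + k).+1.
Proof. by rewrite !mpolyXn -mpolyXD msizeX mdegD !mdegMn !mdeg1 !mul1n. Qed.

Section SumOfSquares.
Variable R : realType.

Local Notation a := ('X_(0 : 'I_2) : {mpoly R[2]}).
Local Notation b := ('X_(1 : 'I_2) : {mpoly R[2]}).

Lemma Pk_factor n :
  Pk R n.+1 = (a ^+ 2 - b ^+ 2) ^+ 2 *
    ((\sum_(i < n.+1) bin_weight (-1) n i *: (a ^+ (n - i) * b ^+ i) ^+ 2) *
     (\sum_(i < n.+1) bin_weight 1 n i *: (a ^+ (n - i) * b ^+ i) ^+ 2)).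
Proof.
have monoE i : (a ^+ (n - i) * b ^+ i) ^+ 2 = (a ^+ 2) ^+ (n - i) * (b ^+ 2) ^+ i.
  by rewrite exprMn -!exprM !(mulnC _ 2).
have sumE e : \sum_(i < n.+1) bin_weight e n i *: (a ^+ (n - i) * b ^+ i) ^+ 2 =
    (2 ^ n)%:R *: (\sum_(i < n.+1) (a ^+ 2) ^+ (n - i) * (b ^+ 2) ^+ i)
    + e *: (a ^+ 2 - b ^+ 2) ^+ n.
  by rewrite scale_geom_add_expBn; apply: eq_bigr => i _; rewrite monoE.
rewrite !sumE scaleN1r scale1r -sqr_subrXX_factor.
rewrite /Pk subn1 /= !(exprM a 2) !(exprM b 2) mulr_natl -scaler_nat.
by rewrite -natrX -expnM mulnC.
Qed.

Definition Pk_root n (ij : 'I_n.+1 * 'I_n.+1) : {mpoly R[2]} :=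
  let: (i, j) := ij in
  (a ^+ 2 - b ^+ 2) * (Num.sqrt (bin_weight (-1) n i * bin_weight 1 n j)
                         *: (a ^+ (n - i) * b ^+ i * (a ^+ (n - j) * b ^+ j))).

Lemma Pk_sum_sqr n :
  Pk R n.+1 = \sum_(i < n.+1) \sum_(j < n.+1) Pk_root (i, j) ^+ 2.
Proof.
rewrite Pk_factor mul_nneg_sums_sqr; first last.
- by move=> j; rewrite bin_weight_ge0 ?normr1.
- by move=> i; rewrite bin_weight_ge0 ?normrN1.
rewrite mulr_sumr; apply: eq_bigr => i _.
by rewrite mulr_sumr; apply: eq_bigr => j _; rewrite exprMn.
Qed.

Lemma msize_Pk_root n (ij : 'I_n.+1 * 'I_n.+1) :
  (msize (Pk_root ij) <= (2 * n.+1).+1)%N.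
Proof.
case: ij => i j /=.
have size_ab : (msize (a ^+ 2 - b ^+ 2) <= 3)%N.
  by apply: leq_trans (msizeD_le _ _) _; rewrite msizeN !msizeXn.
have size_mono (l : 'I_n.+1) : (msize (a ^+ (n - l) * b ^+ l) <= n.+1)%N.
  by rewrite msizeXnXn subnK // -ltnS.
rewrite mulnS; apply: msizeM_leq size_ab _; apply: leq_trans (msizeZ_le _ _) _.
by rewrite mul2n -addnn; apply: msizeM_leq.
Qed.

End SumOfSquares.

Theorem mainTheorem18 (R : realType) (k : nat) (hk : (1 <= k)%N) :
  exists s : seq {mpoly R[2]},
    (forall q, q \in s -> (msize q <= (2 * k).+1)%N) /\
    Pk R k = \sum_(q <- s) q ^+ 2.
Proof.
case: k hk => // n _.
exists [seq Pk_root R ij | ij <- [seq (i, j) | i <- index_enum 'I_n.+1,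
                                                 j <- index_enum 'I_n.+1]].
split; first by move=> q /mapP[ij _ ->]; exact: msize_Pk_root.
by rewrite Pk_sum_sqr big_map big_allpairs.
Qed.
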